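(* Let $G$ be a group generated by a symmetric set $S$ that is closed under conjugation, let $g$ be a positive element of $G$, and let $S_0\subset S$ be the set of elements labelling edges of the interval $[1,g]$. If the Hurwitz action is transitive on the minimal positive factorizations of $g$, then $\langle S_0\mid \mathcal R_h\rangle$ is a presentation of the interval group $G_g$, where $\mathcal R_h$ is the collection of Hurwitz relations visible in $[1,g]$.
   Context: $\ell_S(h)$ is word length of $h$ over $S$. The interval $[1,g]$ is the subgraph of the Cayley graph $\mathrm{Cay}(G,S)$ (edge $h\to hs$ labelled $s$) that is the union of all directed paths of minimal length $\ell_S(g)$ from $1$ to $g$. A positive element is one represented by a positive word over $S$; a minimal positive factorization of $g$ is a word over $S$ of length $\ell_S(g)$ representing $g$. The interval group $G_g$ is generated by $S_0$ subject to all relations read along closed loops in $[1,g]$. The Hurwitz action of the $k$-strand braid group ($k=\ell_S(g)$) on minimal positive factorizations: the $i$-th standard generator replaces the letters $ab$ in positions $i,i+1$ by $ca$ with $c=aba^{-1}$. A Hurwitz relation visible in $[1,g]$ is a relation $ab=ca$ ($a,b,c\in S$, $c=aba^{-1}$) such that the two words $ab$ and $ca$ label two directed paths of length 2 in $[1,g]$ with common start and common end. *)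

From mathcomp Require Import all_boot monoid.
From Stdlib Require Import Relation_Operators.
Set Implicit Arguments. Unset Strict Implicit. Unset Printing Implicit Defensive.
Local Open Scope group_scope.

Section Defs.
Variable G : groupType.

Definition word_over (S : G -> Prop) (w : seq G) : Prop :=
  forall x, x \in w -> S x.

Definition prodw (w : seq G) : G := foldr (fun x y => x * y) 1 w.

Definition generates (S : G -> Prop) : Prop :=
  forall x : G, exists w, word_over S w /\ prodw w = x.

Definition symmetric_set (S : G -> Prop) : Prop :=
  forall s, S s -> S s^-1.

Definition conj_closed (S : G -> Prop) : Prop :=
  forall s x, S s -> S (x^-1 * s * x).

Definition positive (S : G -> Prop) (g : G) : Prop :=
  exists w, word_over S w /\ prodw w = g.

Definition min_fact (S : G -> Prop) (g : G) (w : seq G) : Prop :=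
  [/\ word_over S w, prodw w = g &
      forall w', word_over S w' -> prodw w' = g -> size w <= size w'].

(** The edge h -> h s (labelled s) of Cay(G,S) lies in the interval [1,g],
    i.e. on some directed path of minimal length from 1 to g. *)
Definition interval_edge (S : G -> Prop) (g h s : G) : Prop :=
  exists u v, min_fact S g (u ++ s :: v) /\ prodw u = h.

Definition S0 (S : G -> Prop) (g : G) (s : G) : Prop :=
  exists h, interval_edge S g h s.

Definition hurwitz_move (w1 w2 : seq G) : Prop :=
  exists p q a b, w1 = p ++ a :: b :: q /\ w2 = p ++ (a * b * a^-1) :: a :: q.

(** Transitivity of the braid group action (generated by the sigma_i and their
    inverses, i.e. the symmetric closure of the moves) on the minimal positive
    factorizations of g. *)
Definition hurwitz_transitive (S : G -> Prop) (g : G) : Prop :=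
  forall w w', min_fact S g w -> min_fact S g w' ->
    clos_refl_sym_trans (seq G) hurwitz_move w w'.

(** Signed words over G (letter (s,true) = s, (s,false) = s^-1), i.e.
    elements of the free monoid mapping onto the free group on G. *)
Definition sword := seq (G * bool).

(** [reads_path S g h w h'] : the signed word w is read along an (undirected)
    edge path in [1,g] from vertex h to vertex h' (forward edges contribute
    positive letters, backward edges inverse letters). *)
Inductive reads_path (S : G -> Prop) (g : G) : G -> sword -> G -> Prop :=
| rp_nil h : reads_path S g h [::] h
| rp_fwd h s w h' : interval_edge S g h s -> reads_path S g (h * s) w h' ->
    reads_path S g h ((s, true) :: w) h'
| rp_bwd h s w h' : interval_edge S g (h * s^-1) s ->
    reads_path S g (h * s^-1) w h' ->
    reads_path S g h ((s, false) :: w) h'.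

(** Relations of the interval group: the words read along closed loops in
    [1,g], as relations w = 1. *)
Definition loop_rel (S : G -> Prop) (g : G) (u v : sword) : Prop :=
  v = [::] /\ exists h, reads_path S g h u h.

Definition hurwitz_rel (S : G -> Prop) (g : G) (u v : sword) : Prop :=
  exists h a b c,
    [/\ S a, S b, S c & c = a * b * a^-1] /\
    [/\ interval_edge S g h a, interval_edge S g (h * a) b,
        interval_edge S g h c & interval_edge S g (h * c) a] /\
    u = [:: (a, true); (b, true)] /\ v = [:: (c, true); (a, true)].

(** Two signed words are
    related iff they are equal in the group <generators | R>. *)
Inductive pres_eq (R : sword -> sword -> Prop) : sword -> sword -> Prop :=
| pe_rel p q u v : R u v -> pres_eq R (p ++ u ++ q) (p ++ v ++ q)
| pe_cancel p q x b : pres_eq R (p ++ (x, b) :: (x, ~~ b) :: q) (p ++ q)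
| pe_refl u : pres_eq R u u
| pe_sym u v : pres_eq R u v -> pres_eq R v u
| pe_trans u v w : pres_eq R u v -> pres_eq R v w -> pres_eq R u w.

Definition sword_over (A : G -> Prop) (w : sword) : Prop :=
  forall x, x \in w -> A x.1.

(** <S_0 | Rh> is a presentation of the interval group G_g = <S_0 | loops>:
    the identity on S_0 induces an isomorphism, i.e. both presentations
    identify exactly the same words over S_0. *)
Definition same_presented_group (A : G -> Prop) (R1 R2 : sword -> sword -> Prop)
  : Prop :=
  forall u v, sword_over A u -> sword_over A v -> (pres_eq R1 u v <-> pres_eq R2 u v).

End Defs.

From mathcomp Require Import all_boot monoid.
From Stdlib Require Import Relation_Operators Setoid.
Local Open Scope group_scope.
Set Implicit Arguments. Unset Strict Implicit.

(* A vertex h of [1,g] is reached by a prefix u of some minimal factorization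
   of g.  Any two such prefixes u, u' have the same length, so swapping u for u'
   in u ++ v gives again a minimal factorization; Hurwitz transitivity then
   connects u ++ v to u' ++ v by Hurwitz moves, each of which is a visible
   Hurwitz relation, and cancelling v shows u = u' modulo the Hurwitz
   relations.  Pushing this "canonical prefix" along any closed loop in [1,g]
   shows that the word read along the loop is trivial modulo the Hurwitz
   relations.  Conversely, each visible Hurwitz relation ab = ca is itself read
   along the closed loop a, b, a^-1, c^-1 of [1,g]. *)

Section PresentationCongruence.
Variable G : groupType.
Implicit Types (R : sword G -> sword G -> Prop) (u v w p q : sword G).

Lemma pres_eq_ctx R p q u v :
  pres_eq R u v -> pres_eq R (p ++ u ++ q) (p ++ v ++ q).
Proof.
elim=> {u v} [p' q' u v Ruv | p' q' x b | u | u v _ IH | u v w _ IH1 _ IH2].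
- by have := pe_rel (p ++ p') (q' ++ q) Ruv; rewrite -!catA.
- by have := pe_cancel R (p ++ p') (q' ++ q) x b; rewrite -!catA.
- exact: pe_refl.
- exact: pe_sym.
- exact: pe_trans IH2.
Qed.

Lemma pres_eq_catr R u v q : pres_eq R u v -> pres_eq R (u ++ q) (v ++ q).
Proof. exact: pres_eq_ctx [::] q u v. Qed.

Lemma pres_eq_catl R u v p : pres_eq R u v -> pres_eq R (p ++ u) (p ++ v).
Proof. by move/(pres_eq_ctx p [::]); rewrite !cats0. Qed.

Lemma pres_eq_sub R1 R2 u v :
  (forall u v, R1 u v -> pres_eq R2 u v) -> pres_eq R1 u v -> pres_eq R2 u v.
Proof.
move=> sR12; elim=> {u v} [p q u v /sR12 | p q x b | u | u v _ IH | u v w _ IH1 _ IH2].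
- exact: pres_eq_ctx.
- exact: pe_cancel.
- exact: pe_refl.
- exact: pe_sym.
- exact: pe_trans IH2.
Qed.

Definition sinv (w : sword G) : sword G := rev (map (fun x => (x.1, ~~ x.2)) w).

Lemma pres_eq_cat_sinv R w : pres_eq R (w ++ sinv w) [::].
Proof.
elim: w => [|[x b] w IH] /=; first exact: pe_refl.
rewrite /sinv /= rev_cons -cats1.
apply: (pe_trans (v := [:: (x, b)] ++ [:: (x, ~~ b)])).
  by have := pres_eq_ctx [:: (x, b)] [:: (x, ~~ b)] IH; rewrite /= catA.
exact: (pe_cancel R [::] [::] x b).
Qed.

Lemma pres_eq_sinv_cat R w : pres_eq R (sinv w ++ w) [::].
Proof.
elim: w => [|[x b] w IH] /=; first exact: pe_refl.
rewrite /sinv /= rev_cons -cats1 -catA /=.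
have := pe_cancel R (sinv w) w x (~~ b); rewrite negbK.
by move/pe_trans; apply.
Qed.

Lemma pres_eq_catIr R u v w : pres_eq R (u ++ w) (v ++ w) -> pres_eq R u v.
Proof.
move/(pres_eq_catr (sinv w)); rewrite -!catA => Euv.
have Ew z : pres_eq R (z ++ w ++ sinv w) z.
  by have := pres_eq_catl z (pres_eq_cat_sinv R w); rewrite cats0.
exact: pe_trans (pe_sym (Ew u)) (pe_trans Euv (Ew v)).
Qed.

Lemma pres_eq_catIl R u v w : pres_eq R (w ++ u) (w ++ v) -> pres_eq R u v.
Proof.
move/(pres_eq_catl (sinv w)); rewrite !catA => Euv.
have Ew z : pres_eq R ((sinv w ++ w) ++ z) z := pres_eq_catr z (pres_eq_sinv_cat R w).
exact: pe_trans (pe_sym (Ew u)) (pe_trans Euv (Ew v)).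
Qed.

End PresentationCongruence.

Section PositiveWords.
Variable G : groupType.
Implicit Types (S : G -> Prop) (u v w : seq G).

Lemma prodw_cat u v : prodw (u ++ v) = prodw u * prodw v.
Proof. by elim: u => [|a u IH] /=; rewrite ?mul1g // IH mulgA. Qed.

Lemma prodw_rcons u s : prodw (rcons u s) = prodw u * s.
Proof. by rewrite -cats1 prodw_cat /= mulg1. Qed.

Lemma word_over_cat S u v : word_over S (u ++ v) <-> word_over S u /\ word_over S v.
Proof.
split=> [Wuv | [Wu Wv] x]; last by rewrite mem_cat => /orP[/Wu | /Wv].
by split=> x xu; apply: Wuv; rewrite mem_cat xu ?orbT.
Qed.

Lemma word_over_cons S a u : word_over S (a :: u) <-> S a /\ word_over S u.
Proof.
split=> [Wau | [Sa Wu] x]; last by rewrite inE => /orP[/eqP -> | /Wu].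
by split=> [|x xu]; apply: Wau; rewrite inE ?eqxx ?xu ?orbT.
Qed.

Definition pos (w : seq G) : sword G := map (fun s => (s, true)) w.

Lemma pos_cat u v : pos (u ++ v) = pos u ++ pos v.
Proof. exact: map_cat. Qed.

Lemma min_fact_eq S g w1 w2 :
  (word_over S w1 <-> word_over S w2) -> prodw w1 = prodw w2 ->
  size w1 = size w2 -> min_fact S g w1 -> min_fact S g w2.
Proof.
move=> W12 P12 N12 [W1 P1 M1]; split; first exact/W12.
- by rewrite -P12.
- by rewrite -N12.
Qed.

End PositiveWords.

Section HurwitzMoves.
Variables (G : groupType) (S : G -> Prop) (g : G).
Hypothesis S_conj : conj_closed S.
Implicit Types w : seq G.

Lemma hurwitz_move_word_over w1 w2 :
  hurwitz_move w1 w2 -> word_over S w1 <-> word_over S w2.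
Proof.
move=> [p [q [a [b [-> ->]]]]]; rewrite !word_over_cat !word_over_cons.
split=> [[Wp [Sa [Sb Wq]]] | [Wp [Sc [Sa Wq]]]]; do !split=> //.
  by have := S_conj a^-1 Sb; rewrite invgK.
by have := S_conj a Sc; rewrite !mulgA mulVg mul1g mulgVK.
Qed.

Lemma hurwitz_move_prodw w1 w2 : hurwitz_move w1 w2 -> prodw w1 = prodw w2.
Proof. by move=> [p [q [a [b [-> ->]]]]]; rewrite !prodw_cat /= !mulgA mulgVK. Qed.

Lemma hurwitz_move_size w1 w2 : hurwitz_move w1 w2 -> size w1 = size w2.
Proof. by move=> [p [q [a [b [-> ->]]]]]; rewrite !size_cat. Qed.

Lemma hurwitz_move_min_fact w1 w2 :
  hurwitz_move w1 w2 -> min_fact S g w1 <-> min_fact S g w2.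
Proof.
move=> m12; have W12 := hurwitz_move_word_over m12.
have P12 := hurwitz_move_prodw m12; have N12 := hurwitz_move_size m12.
split; apply: min_fact_eq => //; by [apply: iff_sym | symmetry].
Qed.

Lemma hurwitz_orbit_min_fact w1 w2 :
  clos_refl_sym_trans (seq G) (@hurwitz_move G) w1 w2 ->
  min_fact S g w1 <-> min_fact S g w2.
Proof.
elim=> {w1 w2} [w1 w2 /hurwitz_move_min_fact // | // | w1 w2 _ | w1 w2 w3 _ E12 _ E23].
- exact: iff_sym.
- exact: iff_trans E23.
Qed.

Lemma hurwitz_move_pres_eq w1 w2 : min_fact S g w1 -> hurwitz_move w1 w2 ->
  pres_eq (hurwitz_rel S g) (pos w1) (pos w2).
Proof.
move=> mf1 m12; have /(hurwitz_move_min_fact m12) mf2 := mf1.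
case: m12 mf1 mf2 => p [q [a [b [-> ->]]]] mf1 mf2.
rewrite !pos_cat; apply: (pe_rel (pos p) (pos q) (u := [:: (a, true); (b, true)])
  (v := [:: (a * b * a^-1, true); (a, true)])).
case: (mf1) => /word_over_cat[_ /word_over_cons[Sa /word_over_cons[Sb _]]] _ _.
case: (mf2) => /word_over_cat[_ /word_over_cons[Sc _]] _ _.
exists (prodw p), a, b, (a * b * a^-1); do !split=> //.
- by exists p, (b :: q).
- by exists (rcons p a), q; rewrite prodw_rcons cat_rcons.
- by exists p, (a :: q).
- by exists (rcons p (a * b * a^-1)), q; rewrite prodw_rcons cat_rcons.
Qed.

Lemma hurwitz_orbit_pres_eq w1 w2 : min_fact S g w1 ->
  clos_refl_sym_trans (seq G) (@hurwitz_move G) w1 w2 ->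
  pres_eq (hurwitz_rel S g) (pos w1) (pos w2).
Proof.
move=> + E12; elim: E12 => {w1 w2}
  [w1 w2 m12 mf1 | w _ | w1 w2 E12 IH mf2 | w1 w2 w3 E12 IH12 _ IH23 mf1].
- exact: hurwitz_move_pres_eq.
- exact: pe_refl.
- by apply/pe_sym/IH; apply/(hurwitz_orbit_min_fact E12).
- by apply: pe_trans (IH12 mf1) (IH23 _); apply/(hurwitz_orbit_min_fact E12).
Qed.

End HurwitzMoves.

Section IntervalPrefixes.
Variables (G : groupType) (S : G -> Prop) (g : G).
Implicit Types (h s : G) (u v : seq G).

Definition interval_prefix h u := exists v, min_fact S g (u ++ v) /\ prodw u = h.

Lemma interval_edge_prefix h s : interval_edge S g h s ->
  exists u, interval_prefix h u /\ interval_prefix (h * s) (rcons u s).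
Proof.
move=> [u [v [mf uh]]]; exists u; split; first by exists (s :: v).
by exists v; rewrite cat_rcons prodw_rcons uh.
Qed.

Lemma reads_path_prefix h x w h' : reads_path S g h (x :: w) h' ->
  exists u, interval_prefix h u.
Proof.
move=> rp; inversion rp as [|? ? ? ? e|? ? ? ? e]; subst.
  by have [u [Pu _]] := interval_edge_prefix e; exists u.
by have [u [_ Pus]] := interval_edge_prefix e; exists (rcons u s); rewrite mulgVK in Pus.
Qed.

Lemma min_fact_swap_prefix u u' v v' :
  min_fact S g (u ++ v) -> min_fact S g (u' ++ v') -> prodw u = prodw u' ->
  min_fact S g (u' ++ v).
Proof.
move=> mf mf' Puu'.
have [/word_over_cat[Wu Wv] Puv Muv] := mf.
have [/word_over_cat[Wu' Wv'] Pu'v' Mu'v'] := mf'.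
have le_uu' : size u <= size u'.
  have := Muv (u' ++ v); rewrite !size_cat leq_add2r; apply; first exact/word_over_cat.
  by rewrite prodw_cat -Puu' -prodw_cat Puv.
have le_u'u : size u' <= size u.
  have := Mu'v' (u ++ v'); rewrite !size_cat leq_add2r; apply; first exact/word_over_cat.
  by rewrite prodw_cat Puu' -prodw_cat Pu'v'.
apply: min_fact_eq mf; rewrite ?prodw_cat ?size_cat ?Puu'.
- by rewrite !word_over_cat; split=> [[_ ?] | [_ ?]].
- by [].
- by congr (_ + _); apply/eqP; rewrite eqn_leq le_uu' le_u'u.
Qed.

Hypotheses (S_conj : conj_closed S) (S_trans : hurwitz_transitive S g).

Lemma interval_prefix_pres_eq h u u' : interval_prefix h u -> interval_prefix h u' ->
  pres_eq (hurwitz_rel S g) (pos u) (pos u').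
Proof.
move=> [v [mf <-]] [v' [mf' Pu']].
have mf'' := min_fact_swap_prefix mf mf' (esym Pu').
have := hurwitz_orbit_pres_eq S_conj mf (S_trans mf mf'').
by rewrite !pos_cat; apply: pres_eq_catIr.
Qed.

Lemma reads_path_pres_eq h w h' u u' : reads_path S g h w h' ->
  interval_prefix h u -> interval_prefix h' u' ->
  pres_eq (hurwitz_rel S g) (pos u ++ w) (pos u').
Proof.
move=> rp; elim: rp u u' => {h w h'} [h | h s w h' e _ IH | h s w h' e _ IH] u u' Pu Pu'.
- by rewrite cats0; apply: interval_prefix_pres_eq Pu Pu'.
- have [a [Pa Pas]] := interval_edge_prefix e.
  apply: pe_trans (pres_eq_catr _ (interval_prefix_pres_eq Pu Pa)) _.
  by have := IH _ _ Pas Pu'; rewrite -cats1 pos_cat -catA.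
- have [a [Pa Pas]] := interval_edge_prefix e; rewrite mulgVK in Pas.
  apply: pe_trans (pres_eq_catr _ (interval_prefix_pres_eq Pu Pas)) _.
  rewrite -cats1 pos_cat -catA /=.
  exact: pe_trans (pe_cancel _ (pos a) w s true) (IH _ _ Pa Pu').
Qed.

Lemma loop_rel_pres_eq_hurwitz (w1 w2 : sword G) :
  loop_rel S g w1 w2 -> pres_eq (hurwitz_rel S g) w1 w2.
Proof.
move=> [-> [h rp]]; case: w1 rp => [|x w] rp; first exact: pe_refl.
have [u Pu] := reads_path_prefix rp.
apply: (@pres_eq_catIl _ _ _ _ (pos u)); rewrite cats0.
exact: (reads_path_pres_eq rp Pu Pu).
Qed.

End IntervalPrefixes.

Lemma hurwitz_rel_pres_eq_loop (G : groupType) (S : G -> Prop) (g : G) (u v : sword G) :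
  hurwitz_rel S g u v -> pres_eq (loop_rel S g) u v.
Proof.
move=> [h [a [b [c [[_ _ _ c_def] [[Eha Ehab Ehc Ehca] [-> ->]]]]]]].
set loop := [:: (a, true); (b, true); (a, false); (c, false)].
have Rloop : reads_path S g h loop h.
  apply: rp_fwd => //; apply: rp_fwd => //.
  have Ehab_c : h * a * b * a^-1 = h * c by rewrite c_def !mulgA.
  apply: rp_bwd; rewrite Ehab_c //.
  by apply: rp_bwd; rewrite mulgK //; apply: rp_nil.
have Eab : pres_eq (loop_rel S g) (loop ++ [:: (c, true); (a, true)]) [:: (a, true); (b, true)].
  apply: pe_trans (pe_cancel _ [:: (a, true); (b, true); (a, false)] [:: (a, true)] c false) _.
  exact: (pe_cancel _ [:: (a, true); (b, true)] [::] a false).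
apply: pe_trans (pe_sym Eab) _.
have := pe_rel [::] [:: (c, true); (a, true)] (R := loop_rel S g) (u := loop) (v := [::]).
by apply; split=> //; exists h.
Qed.

Theorem proposition3p5 (G : groupType) (S : G -> Prop) (g : G) :
  generates S -> symmetric_set S -> conj_closed S -> positive S g ->
  hurwitz_transitive S g ->
  same_presented_group (S0 S g) (loop_rel S g) (hurwitz_rel S g).
Proof.
move=> _ _ S_conj _ S_trans u v _ _; split; apply: pres_eq_sub.
- exact: loop_rel_pres_eq_hurwitz.
- exact: hurwitz_rel_pres_eq_loop.
Qed.
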